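(* Let $\alpha=[0;a_1,a_2,\dots]$ and $\beta=[0;b_1,b_2,\dots]$ be irrational power series in $\widehat K$ (all $a_i,b_i$ nonconstant polynomials in $R$). Assume there is an integer $n\ge0$ such that $a_i=b_i$ for $i=1,\dots,n$ and $a_{n+1}\ne b_{n+1}$. Then $|\alpha-\beta|=q^{-2\left(\sum_{i=1}^n\deg a_i\right)-\deg a_{n+1}-\deg b_{n+1}+\deg(a_{n+1}-b_{n+1})}.$
   Context: $q$ is a positive power of a prime, $R=\mathbb F_q[Y]$, $\widehat K=\mathbb F_q((Y^{-1}))$ with absolute value $|P/Q|=q^{\deg P-\deg Q}$ extended to $\widehat K$. $[a_0;a_1,a_2,\dots]$ denotes the continued fraction $a_0+1/(a_1+1/(a_2+\cdots))$. *)

From HB Require Import structures.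
From mathcomp Require Import all_boot all_order all_algebra all_field.
Set Implicit Arguments. Unset Strict Implicit. Unset Printing Implicit Defensive.
Import Order.TTheory GRing.Theory Num.Theory.
Local Open Scope ring_scope.

Section Laurent.
Variable F : finFieldType.

(* A Laurent series  sum_{k >= 0} lcoef k * Y^(lval - k)  in F((Y^{-1})). *)
Record lser := LSer { lval : int ; lcoef : nat -> F }.

Definition coef (x : lser) (m : int) : F :=
  if m <= lval x then lcoef x `|lval x - m|%N else 0.

Definition leq_ser (x y : lser) : Prop := forall m, coef x m = coef y m.

(* series with coefficients f (f m = 0 is assumed for m > v) *)
Definition mkL (v : int) (f : int -> F) : lser :=
  LSer v (fun k : nat => f (v - k%:Z)).

Definition ladd (x y : lser) : lser :=
  mkL (Num.max (lval x) (lval y)) (fun m => coef x m + coef y m).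
Definition lopp (x : lser) : lser := mkL (lval x) (fun m => - coef x m).
Definition lsub (x y : lser) : lser := ladd x (lopp y).
Definition lmul (x y : lser) : lser :=
  LSer (lval x + lval y)
       (fun k => \sum_(i < k.+1) lcoef x i * lcoef y (k - i)).

Definition lpoly (p : {poly F}) : lser :=
  mkL (size p)%:Z (fun m => if (0 <= m) then p`_`|m| else 0).
Definition lone : lser := lpoly 1.

(* deg x = d, i.e. |x| = q^d (x <> 0) *)
Definition lorder (x : lser) (d : int) : Prop :=
  coef x d != 0 /\ forall m, d < m -> coef x m = 0.

Definition labs_eq (x : lser) (r : rat) : Prop :=
  ((forall m, coef x m = 0) /\ r = 0) \/
  (exists d, lorder x d /\ r = (#|F|%:R : rat) ^ d).

Definition lt1 (x : lser) : Prop := forall m, 0 <= m -> coef x m = 0.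

(* alpha = [0; a_1, a_2, ...] : the continued fraction algorithm produces
   the partial quotients a_1, a_2, ... (a 0 is unused): the complete tails
   t_n = [0; a_{n+1}, a_{n+2}, ...] satisfy t_0 = alpha, |t_n| < 1 and
   t_n = 1 / (a_{n+1} + t_{n+1}). *)
Definition cf_expansion (alpha : lser) (a : nat -> {poly F}) : Prop :=
  exists t : nat -> lser,
    leq_ser (t 0%N) alpha /\ (forall n, lt1 (t n)) /\
    (forall n, leq_ser (lmul (t n) (ladd (lpoly (a n.+1)) (t n.+1))) lone).

End Laurent.

Definition pdeg (F : finFieldType) (p : {poly F}) : int := ((size p).-1)%:Z.

From mathcomp Require Import all_boot all_order all_algebra all_field zify ring.
Import Order.TTheory GRing.Theory Num.Theory.
Local Open Scope ring_scope.

(** If t = 1/(A + t') and u = 1/(B + u') with |t'|, |u'| < 1, then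
    (t - u)(A + t')(B + u') = (B + u') - (A + t'), and |A + t'| = |A|,
    |B + u'| = |B|.  The right-hand side is -(t' - u') when A = B and has
    absolute value |A - B| otherwise, so each common partial quotient
    contributes a factor |a_i|^-2 to |alpha - beta| and the first differing
    pair contributes |a_(n+1) - b_(n+1)| / (|a_(n+1)| |b_(n+1)|).
    Identities between series are checked on truncations, where they become
    identities between polynomials modulo a power of the variable. *)

Lemma take_polyMl (R : comNzRingType) N (p q : {poly R}) :
  take_poly N (take_poly N p * q) = take_poly N (p * q).
Proof.
by rewrite -{2}(poly_take_drop N p) mulrDl raddfD /= mulrAC take_polyMXn_0 addr0.
Qed.

Lemma take_polyMr (R : comNzRingType) N (p q : {poly R}) :
  take_poly N (p * take_poly N q) = take_poly N (p * q).
Proof. by rewrite mulrC take_polyMl mulrC. Qed.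

Section LaurentSeries.
Context {F : finFieldType}.
Implicit Types (x y T U X Y : lser F) (A : {poly F}).

Definition ldeg_le x (B : int) : Prop := forall m : int, B < m -> coef x m = 0.

Lemma ldeg_le_lval x : ldeg_le x (lval x).
Proof. by move=> m hm; rewrite /coef leNgt hm. Qed.

Lemma ldeg_le_trans {x} {B B' : int} : ldeg_le x B -> B <= B' -> ldeg_le x B'.
Proof. by move=> hx hB m hm; apply: hx; apply: le_lt_trans hm. Qed.

Lemma coef_lval_sub x (k : nat) : coef x (lval x - k%:Z) = lcoef x k.
Proof. by rewrite /coef ifT; [congr lcoef|]; lia. Qed.

Lemma coef_mkL {v} {f : int -> F} :
  (forall m : int, v < m -> f m = 0) -> forall m, coef (mkL v f) m = f m.
Proof.
move=> hf m; rewrite /coef /=; case: ifP => hm; first by congr f; lia.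
by rewrite hf //; lia.
Qed.

Lemma coef_ladd x y m : coef (ladd x y) m = coef x m + coef y m.
Proof. by rewrite coef_mkL // => k hk; rewrite !ldeg_le_lval ?addr0 //; lia. Qed.

Lemma coef_lopp x m : coef (lopp x) m = - coef x m.
Proof. by rewrite coef_mkL // => k hk; rewrite ldeg_le_lval ?oppr0. Qed.

Lemma coef_lsub x y m : coef (lsub x y) m = coef x m - coef y m.
Proof. by rewrite coef_ladd coef_lopp. Qed.

Lemma coef_lpoly A m : coef (lpoly A) m = if 0 <= m then A`_`|m| else 0.
Proof.
rewrite coef_mkL // => k hk; case: ifP => // k_ge0.
by rewrite nth_default // -lez_nat gez0_abs // ltW.
Qed.

Lemma ldeg_le_lsub {x y} {B : int} : ldeg_le x B -> ldeg_le y B -> ldeg_le (lsub x y) B.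
Proof. by move=> hx hy m hm; rewrite coef_lsub hx ?hy ?subr0. Qed.

Lemma lt1_ldeg_le x : lt1 x -> ldeg_le x (-1).
Proof. by move=> hx m hm; apply: hx; lia. Qed.

Lemma lt1_lsub x y : lt1 x -> lt1 y -> lt1 (lsub x y).
Proof. by move=> hx hy m hm; rewrite coef_lsub hx ?hy ?subr0. Qed.

(* The coefficients of Y^B, Y^(B-1), ..., Y^(B-N+1) in x, as a polynomial in
   the variable Y^-1. *)
Definition ltrunc (N : nat) (B : int) x : {poly F} := \poly_(k < N) coef x (B - k%:Z).

Lemma ltrunc_ext {x y} : leq_ser x y -> forall N B, ltrunc N B x = ltrunc N B y.
Proof. by move=> e N B; apply/polyP => k; rewrite !coef_poly e. Qed.

Lemma ltrunc_lsub N B x y : ltrunc N B (lsub x y) = ltrunc N B x - ltrunc N B y.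
Proof.
by apply/polyP => k; rewrite coefB !coef_poly coef_lsub; case: ifP; rewrite ?subr0.
Qed.

Lemma ltrunc_lone N (b : nat) : ltrunc N b%:Z (lone F) = take_poly N 'X^b.
Proof.
apply/polyP => k; rewrite coef_poly coef_take_poly coefXn coef_lpoly coef1.
case: ifP => // _; case: (eqVneq k b) => [->|kb]; first by rewrite subrr.
case: ifP => // _; case: eqP => // /eqP; lia.
Qed.

Lemma ltrunc_inj (B : int) {x y} : ldeg_le x B -> ldeg_le y B ->
  (forall N, ltrunc N B x = ltrunc N B y) -> leq_ser x y.
Proof.
move=> hx hy e m; case: (lerP m B) => hm; last by rewrite hx ?hy.
have -> : m = B - `|B - m|%N%:Z by lia.
by have /polyP/(_ `|B - m|%N) := e `|B - m|%N.+1; rewrite !coef_poly ltnSn.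
Qed.

Lemma ltrunc_shift N B (d : nat) x : ldeg_le x B ->
  ltrunc N (B + d%:Z) x = take_poly N ('X^d * ltrunc N B x).
Proof.
move=> hx; apply/polyP => k; rewrite coef_take_poly coefXnM !coef_poly.
case: ltnP => // hkN; case: ltnP => hkd; first by rewrite hx //; lia.
by rewrite ifT; [congr coef|]; lia.
Qed.

Lemma ltrunc_lmul_lval N x y :
  ltrunc N (lval x + lval y) (lmul x y) =
  take_poly N (ltrunc N (lval x) x * ltrunc N (lval y) y).
Proof.
apply/polyP => k; rewrite coef_take_poly coef_poly; case: ltnP => // hk.
rewrite (coef_lval_sub (lmul x y)) coefM; apply: eq_bigr => i _.
by have hi := ltn_ord i; rewrite !coef_poly !coef_lval_sub !ifT //; lia.
Qed.

Lemma ltrunc_lmul_ge N (B1 B2 : int) x y : lval x <= B1 -> lval y <= B2 ->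
  ltrunc N (B1 + B2) (lmul x y) = take_poly N (ltrunc N B1 x * ltrunc N B2 y).
Proof.
move=> h1 h2.
have [d1 ->] : exists d1 : nat, B1 = lval x + d1%:Z by exists `|B1 - lval x|%N; lia.
have [d2 ->] : exists d2 : nat, B2 = lval y + d2%:Z by exists `|B2 - lval y|%N; lia.
have -> : lval x + d1%:Z + (lval y + d2%:Z) = lval x + lval y + (d1 + d2)%N%:Z by lia.
rewrite !ltrunc_shift ?ltrunc_lmul_lval; try exact: ldeg_le_lval.
by rewrite take_polyMr take_polyMl take_polyMr exprD; congr take_poly; ring.
Qed.

Lemma lmul_ext {x x' y y'} :
  leq_ser x x' -> leq_ser y y' -> leq_ser (lmul x y) (lmul x' y').
Proof.
move=> ex ey.
pose B1 : int := Num.max (lval x) (lval x'); pose B2 : int := Num.max (lval y) (lval y').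
have [hx hx'] : lval x <= B1 /\ lval x' <= B1 by rewrite !le_max !lexx orbT.
have [hy hy'] : lval y <= B2 /\ lval y' <= B2 by rewrite !le_max !lexx orbT.
apply: (ltrunc_inj (B1 + B2)) => [||N].
- exact: ldeg_le_trans (ldeg_le_lval (lmul x y)) (lerD hx hy).
- exact: ldeg_le_trans (ldeg_le_lval (lmul x' y')) (lerD hx' hy').
by rewrite !ltrunc_lmul_ge // (ltrunc_ext ex) (ltrunc_ext ey).
Qed.

Lemma ltrunc_lmul N {B1 B2 : int} {x y} : ldeg_le x B1 -> ldeg_le y B2 ->
  ltrunc N (B1 + B2) (lmul x y) = take_poly N (ltrunc N B1 x * ltrunc N B2 y).
Proof.
move=> /coef_mkL ex /coef_mkL ey.
rewrite -(ltrunc_ext (lmul_ext ex ey)) ltrunc_lmul_ge //.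
by rewrite (ltrunc_ext ex) (ltrunc_ext ey).
Qed.

Lemma ldeg_le_lmul {x y} {B1 B2 : int} :
  ldeg_le x B1 -> ldeg_le y B2 -> ldeg_le (lmul x y) (B1 + B2).
Proof.
move=> /coef_mkL ex /coef_mkL ey m hm.
by rewrite -(lmul_ext ex ey) ldeg_le_lval.
Qed.

Lemma lmul_lsub_inv {T U X Y} :
  leq_ser (lmul T X) (lone F) -> leq_ser (lmul U Y) (lone F) ->
  leq_ser (lmul (lmul (lsub T U) X) Y) (lsub Y X).
Proof.
move=> hTX hUY.
pose b := (`|lval T| + `|lval U| + `|lval X| + `|lval Y|)%N.
have le_b z : (`|lval z| <= b)%N -> ldeg_le z b.
  by move=> hz; apply: (ldeg_le_trans (ldeg_le_lval z)); lia.
have hT : ldeg_le T b by apply: le_b; lia.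
have hU : ldeg_le U b by apply: le_b; lia.
have hX : ldeg_le X b by apply: le_b; lia.
have hY : ldeg_le Y b by apply: le_b; lia.
have h3b : b%:Z + b%:Z + b%:Z = b%:Z + (b + b)%N%:Z by rewrite PoszD addrA.
apply: (ltrunc_inj (b%:Z + b%:Z + b%:Z)) => [||N].
- exact: ldeg_le_lmul (ldeg_le_lmul (ldeg_le_lsub hT hU) hX) hY.
- by apply: (ldeg_le_trans (ldeg_le_lsub hY hX)); lia.
have one_trunc Z W : leq_ser (lmul Z W) (lone F) -> ldeg_le Z b -> ldeg_le W b ->
    take_poly N (ltrunc N b Z * ltrunc N b W) = take_poly N 'X^(b + b).
  by move=> e hZ hW; rewrite -ltrunc_lmul // (ltrunc_ext e) -PoszD ltrunc_lone.
have hTU := ldeg_le_lsub hT hU.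
rewrite ltrunc_lsub (ltrunc_lmul N (ldeg_le_lmul hTU hX) hY) (ltrunc_lmul N hTU hX).
rewrite ltrunc_lsub take_polyMl mulrBl mulrBl raddfB /= [ltrunc N b U * _ * _]mulrAC.
rewrite -take_polyMl one_trunc // -[take_poly N (_ * ltrunc N b X)]take_polyMl one_trunc //.
by rewrite h3b !ltrunc_shift // !take_polyMl.
Qed.

Lemma lorder_ext {x y} {d : int} : leq_ser x y -> lorder y d -> lorder x d.
Proof. by move=> e [hd hy]; split=> [|m hm]; rewrite e // hy. Qed.

Lemma lorder_lopp {x} {d : int} : lorder x d -> lorder (lopp x) d.
Proof. by move=> [hd hx]; split=> [|m hm]; rewrite coef_lopp ?oppr_eq0 // hx ?oppr0. Qed.

Lemma lorder_uniq {x} {d e : int} : lorder x d -> lorder x e -> d = e.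
Proof.
move=> [hd hx] [he hx']; case: (ltgtP d e) => // lt_de.
- by move: he; rewrite hx ?eqxx.
- by move: hd; rewrite hx' ?eqxx.
Qed.

Lemma lorder_exists {x} {m : int} : coef x m != 0 -> exists2 d, m <= d & lorder x d.
Proof.
move=> hm; have m_le : m <= lval x.
  by rewrite leNgt; apply: contra hm => /ldeg_le_lval ->.
have em : m = lval x - `|lval x - m|%N%:Z by lia.
have nz : exists k, lcoef x k != 0 by exists `|lval x - m|%N; rewrite -coef_lval_sub -em.
have [k hk k_min] := ex_minnP nz; exists (lval x - k%:Z).
  by have := k_min `|lval x - m|%N; rewrite -coef_lval_sub -em => /(_ hm); lia.
split=> [|m' hm']; first by rewrite coef_lval_sub.
case: (lerP m' (lval x)) => [m'_le|]; last exact: ldeg_le_lval.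
rewrite [m'](_ : _ = lval x - `|lval x - m'|%N%:Z) ?coef_lval_sub; last by lia.
by apply/eqP/negP => /negP /k_min; lia.
Qed.

Lemma lorder_lmul {x y} {d e : int} : lorder x d -> lorder y e -> lorder (lmul x y) (d + e).
Proof.
move=> [hd hx] [he hy]; split; last exact: ldeg_le_lmul hx hy.
have /polyP/(_ 0%N) := ltrunc_lmul 1 hx hy.
by rewrite coef_take_poly coef0M !coef_poly /= !subr0 => ->; rewrite mulf_neq0.
Qed.

Lemma lorder_lmul_cancel {x y} {e f : int} :
  lorder y e -> lorder (lmul x y) f -> lorder x (f - e).
Proof.
move=> [he hy] hxy.
have hx : ldeg_le x (f - e).
  move=> m hm; apply/eqP/negP => /negP /lorder_exists [d le_md hd].
  by have := lorder_uniq (lorder_lmul hd (conj he hy)) hxy; lia.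
split=> //; apply/negP => /eqP z.
have hx' : ldeg_le x (f - e - 1).
  by move=> m hm; case: (ltgtP m (f - e)) => [|/hx|->] //; lia.
by case: hxy => + _; rewrite (ldeg_le_lmul hx' hy) ?eqxx //; lia.
Qed.

Lemma lorder_lpoly {A} : A != 0 -> lorder (lpoly A) (pdeg A).
Proof.
move=> A_neq0; split=> [|m hm]; rewrite coef_lpoly.
  by rewrite /pdeg /= -lead_coefE lead_coef_eq0.
case: ifP => // m_ge0; rewrite nth_default //.
move: hm; rewrite /pdeg -{1}(gez0_abs m_ge0) ltz_nat; exact: leq_trans (leqSpred _).
Qed.

Lemma lorder_lpoly_ladd {A T} : A != 0 -> lt1 T -> lorder (ladd (lpoly A) T) (pdeg A).
Proof.
move=> /lorder_lpoly [hd hA] /lt1_ldeg_le hT.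
have hT' : ldeg_le T (pdeg A - 1) by apply: (ldeg_le_trans hT); rewrite /pdeg; lia.
split=> [|m hm]; rewrite coef_ladd.
  by rewrite hT' ?addr0 //; lia.
by rewrite hA ?hT' ?addr0 //; lia.
Qed.

Lemma lorder_lsub_inv {T U X Y} {dX dY e : int} :
  leq_ser (lmul T X) (lone F) -> leq_ser (lmul U Y) (lone F) ->
  lorder X dX -> lorder Y dY -> lorder (lsub Y X) e ->
  lorder (lsub T U) (e - dX - dY).
Proof.
move=> hTX hUY hX hY he.
have := lorder_lmul_cancel hX (lorder_lmul_cancel hY (lorder_ext (lmul_lsub_inv hTX hUY) he)).
by rewrite addrAC.
Qed.

Lemma lorder_lsub_cf {A B T U} : A != B -> lt1 T -> lt1 U ->
  lorder (lsub (ladd (lpoly B) U) (ladd (lpoly A) T)) (pdeg (A - B)).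
Proof.
move=> neq_AB hT hU; rewrite /pdeg -opprB size_polyN.
apply: (lorder_ext (y := ladd (lpoly (B - A)) (lsub U T))).
  by move=> m; rewrite !(coef_lsub, coef_ladd, coef_lpoly) coefB; case: ifP => _; ring.
by apply: lorder_lpoly_ladd; [rewrite subr_eq0 eq_sym | exact: lt1_lsub].
Qed.

(* [cf_expansion alpha a] unfolds to [exists t, leq_ser (t 0) alpha /\ cf_tails t a]. *)
Definition cf_tails (t : nat -> lser F) (a : nat -> {poly F}) : Prop :=
  (forall n, lt1 (t n)) /\
  (forall n, leq_ser (lmul (t n) (ladd (lpoly (a n.+1)) (t n.+1))) (lone F)).

Lemma cf_tails_behead {t a} : cf_tails t a -> cf_tails (fun n => t n.+1) (fun n => a n.+1).
Proof. by case=> ht hta; split=> n; [exact: ht | exact: hta]. Qed.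

Lemma lorder_cf_tails_sub {t u a b} {e d : int} :
  cf_tails t a -> cf_tails u b -> a 1%N != 0 -> b 1%N != 0 ->
  lorder (lsub (ladd (lpoly (b 1%N)) (u 1%N)) (ladd (lpoly (a 1%N)) (t 1%N))) e ->
  d = e - pdeg (a 1%N) - pdeg (b 1%N) -> lorder (lsub (t 0%N) (u 0%N)) d.
Proof.
move=> [ht hta] [hu hub] ha hb he ->.
exact: lorder_lsub_inv (hta 0%N) (hub 0%N) (lorder_lpoly_ladd ha (ht 1%N))
                       (lorder_lpoly_ladd hb (hu 1%N)) he.
Qed.

Lemma lorder_cf_sub {n a b t u} :
  (forall i, a i.+1 != 0) -> (forall i, b i.+1 != 0) ->
  cf_tails t a -> cf_tails u b ->
  (forall i, (1 <= i <= n)%N -> a i = b i) -> a n.+1 != b n.+1 ->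
  lorder (lsub (t 0%N) (u 0%N))
    (- 2 * (\sum_(1 <= i < n.+1) pdeg (a i))
     - pdeg (a n.+1) - pdeg (b n.+1) + pdeg (a n.+1 - b n.+1)).
Proof.
elim: n a b t u => [|n IH] a b t u ha hb ht hu eq_ab neq_ab.
  apply: (lorder_cf_tails_sub ht hu (ha 0%N) (hb 0%N)).
    by apply: lorder_lsub_cf neq_ab (ht.1 1%N) (hu.1 1%N).
  by rewrite big_geq //; ring.
have eq_ab1 : a 1%N = b 1%N by apply: eq_ab.
have eq_ab' i : (1 <= i <= n)%N -> a i.+1 = b i.+1 by move=> /andP[_ hi]; apply: eq_ab.
have IHn := IH _ _ _ _ (fun i => ha i.+1) (fun i => hb i.+1)
  (cf_tails_behead ht) (cf_tails_behead hu) eq_ab' neq_ab.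
apply: (lorder_cf_tails_sub ht hu (ha 0%N) (hb 0%N) (lorder_ext _ (lorder_lopp IHn))).
  by move=> m; rewrite !(coef_lsub, coef_ladd, coef_lopp) eq_ab1; ring.
by rewrite big_nat_recl //= eq_ab1; ring.
Qed.

End LaurentSeries.

Theorem lemma2p3 (F : finFieldType) (alpha beta : lser F)
    (a b : nat -> {poly F}) (n : nat) :
  (forall i, (1 <= i)%N -> (1 < size (a i))%N) ->
  (forall i, (1 <= i)%N -> (1 < size (b i))%N) ->
  cf_expansion alpha a -> cf_expansion beta b ->
  (forall i, (1 <= i <= n)%N -> a i = b i) ->
  a n.+1 != b n.+1 ->
  labs_eq (lsub alpha beta)
    ((#|F|%:R : rat) ^ (- 2 * (\sum_(1 <= i < n.+1) pdeg (a i))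
                        - pdeg (a n.+1) - pdeg (b n.+1)
                        + pdeg (a n.+1 - b n.+1))).
Proof.
move=> ha hb [t [t0 ht]] [u [u0 hu]] eq_ab neq_ab.
have nonzero (c : nat -> {poly F}) :
    (forall i, (1 <= i)%N -> (1 < size (c i))%N) -> forall i, c i.+1 != 0.
  by move=> hc i; rewrite -size_poly_gt0 ltnW ?hc.
right; eexists; split; last reflexivity.
apply: (lorder_ext _ (lorder_cf_sub (nonzero _ ha) (nonzero _ hb) ht hu eq_ab neq_ab)).
by move=> m; rewrite !coef_lsub t0 u0.
Qed.
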